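(* Every partition $\pi\in\mathcal P$ is first-order definable in $\mathbf Y^*=\langle\mathcal P,\le,[1]+[1]\rangle$, i.e. for each $\pi$ there is a first-order formula $\phi_\pi(x)$ in the language $\{\le,[1]+[1]\}$ satisfied in $\mathbf Y^*$ exactly by $\pi$. Consequently, the conjugation map $\pi\mapsto\pi^\partial$ is the unique nontrivial automorphism of Young's lattice $\mathbf Y=\langle\mathcal P,\le\rangle$.
   Context: $\mathcal P$ is the set of all integer partitions, including the empty partition $\emptyset$; a partition is a nonincreasing finite sequence $(n_1,\dots,n_t)$ of positive integers. $[1]+[1]$ denotes the partition $(1,1)$. Young's lattice is $\mathbf Y=\langle\mathcal P,\le\rangle$ where $(s_1,\dots,s_r)\le(n_1,\dots,n_t)$ iff $r\le t$ and $s_i\le n_i$ for all $i\le r$ (containment of Young diagrams). $\mathbf Y^*$ is $\mathbf Y$ expanded by a constant symbol interpreted as $(1,1)$. The conjugate $\pi^\partial$ of $\pi$ is the partition whose Young diagram is the transpose of that of $\pi$. *)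

From mathcomp Require Import all_boot.
Set Implicit Arguments. Unset Strict Implicit. Unset Printing Implicit Defensive.

Definition is_partition (s : seq nat) : bool :=
  sorted geq s && all (fun n => 0 < n) s.

Definition ypartition := {s : seq nat | is_partition s}.

Definition le_seq (s n : seq nat) : bool :=
  (size s <= size n) && all (fun i => nth 0 s i <= nth 0 n i) (iota 0 (size s)).

Definition le_part (p q : ypartition) : bool := le_seq (val p) (val q).

Definition one_one : ypartition := exist _ [:: 1; 1] (erefl true).

(* Conjugate: the j-th part of the conjugate counts parts of size > j,
   i.e. the transpose of the Young diagram. *)
Definition conj_seq (s : seq nat) : seq nat :=
  mkseq (fun j => count (fun n => j < n) s) (head 0 s).

(* Lifted to partitions (conj_seq of a ypartition is a ypartition; the default
   branch of insubd is never used). *)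
Definition conj_part (p : ypartition) : ypartition := insubd p (conj_seq (val p)).

Inductive term : Type :=
| TVar : nat -> term
| TConst : term.

Inductive formula : Type :=
| FLe : term -> term -> formula
| FEq : term -> term -> formula
| FFalse : formula
| FNot : formula -> formula
| FAnd : formula -> formula -> formula
| FOr : formula -> formula -> formula
| FImp : formula -> formula -> formula
| FEx : nat -> formula -> formula
| FAll : nat -> formula -> formula.

Definition upd (e : nat -> ypartition) (n : nat) (v : ypartition) : nat -> ypartition :=
  fun m => if m == n then v else e m.

Definition eval_term (e : nat -> ypartition) (t : term) : ypartition :=
  match t with TVar n => e n | TConst => one_one end.

Fixpoint holds (e : nat -> ypartition) (f : formula) : Prop :=
  match f with
  | FLe t u => le_part (eval_term e t) (eval_term e u)
  | FEq t u => eval_term e t = eval_term e u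
  | FFalse => False
  | FNot g => ~ holds e g
  | FAnd g h => holds e g /\ holds e h
  | FOr g h => holds e g \/ holds e h
  | FImp g h => holds e g -> holds e h
  | FEx n g => exists v : ypartition, holds (upd e n v) g
  | FAll n g => forall v : ypartition, holds (upd e n v) g
  end.

Definition definable (pi : ypartition) : Prop :=
  exists phi : formula, forall (e : nat -> ypartition) (x : ypartition),
    holds (upd e 0 x) phi <-> x = pi.

Definition is_automorphism (f : ypartition -> ypartition) : Prop :=
  bijective f /\ forall p q, le_part p q = le_part (f p) (f q).

From Stdlib Require Import Setoid.
From mathcomp Require Import all_boot.

(* Definability is built bottom-up from two formula schemes, "the least" and
   "the greatest" element of a definable set.  The one-row partitions (n) and
   the one-column partitions (1^n) are the n-th elements (counting from 0) of
   the chains {x | not (1,1) <= x} and {x | not (2) <= x}; the n-th element of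
   such a chain is the least chain element strictly above the (n-1)-th.  The
   a x b rectangle is the greatest partition above neither (a+1) nor
   (1^(b+1)), and a partition p is the least partition above every rectangle
   p_i x (i+1).

   For the automorphisms: an order automorphism fixes the bottom, hence the
   unique atom (1), and permutes the covers (2) and (1,1) of (1).  Truth of
   formulas is invariant under automorphisms fixing the constant (1,1), so an
   automorphism fixing (1,1) fixes every (definable) partition; if instead
   (1,1) goes to (2), composing with conjugation reduces to the first case. *)

Definition row (x : ypartition) (i : nat) : nat := nth 0 (val x) i.

Lemma part_head {s : seq nat} {n : nat} : is_partition s -> n \in s -> n <= head 0 s.
Proof.
case: s => [|a s] //= /andP[s_sorted _]; rewrite inE => /orP[/eqP->//|n_s].
by have /allP := order_path_min (rev_trans leq_trans) s_sorted; apply.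
Qed.

Lemma row_mono x i j : i <= j -> row x j <= row x i.
Proof.
case: x => s s_part ij; have /andP[s_sorted _] := s_part; rewrite /row /=.
case: (ltnP j (size s)) => js; last by rewrite nth_default.
apply: (sorted_leq_nth (rev_trans leq_trans) _ _ s_sorted) => //=.
exact: leq_ltn_trans js.
Qed.

Lemma row_pos x i : (0 < row x i) = (i < size (val x)).
Proof.
case: x => s s_part; have /andP[_ /allP s_pos] := s_part; rewrite /row /=.
case: (ltnP i (size s)) => hi; last by rewrite nth_default.
by apply: s_pos; rewrite mem_nth.
Qed.

Lemma le_partP x y : le_part x y <-> forall i, row x i <= row y i.
Proof.
rewrite /le_part /le_seq /row; split.
  move=> /andP[_ /allP le_xy] i; case: (ltnP i (size (val x))) => hi.
    by apply: le_xy; rewrite mem_iota.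
  by rewrite nth_default.
move=> le_xy; apply/andP; split; last by apply/allP => i _; exact: le_xy.
rewrite leqNgt; apply/negP => lt_yx.
have := le_xy (size (val y)); rewrite (nth_default _ (leqnn _)) leqn0 => /eqP x0.
by have := row_pos x (size (val y)); rewrite /row x0 lt_yx.
Qed.

Lemma row_inj x y : (forall i, row x i = row y i) -> x = y.
Proof.
move=> eq_xy; apply: val_inj.
have size_xy : size (val x) = size (val y).
  apply/eqP; rewrite eqn_leq; apply/andP; split; rewrite leqNgt; apply/negP => lt.
    by move: (row_pos x (size (val y))); rewrite lt eq_xy row_pos ltnn.
  by move: (row_pos y (size (val x))); rewrite lt -eq_xy row_pos ltnn.
by apply: (eq_from_nth size_xy) => i _; exact: eq_xy.
Qed.

Lemma le_part_refl x : le_part x x.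
Proof. by apply/le_partP. Qed.

Lemma le_part_trans x y z : le_part x y -> le_part y z -> le_part x z.
Proof.
move=> /le_partP le_xy /le_partP le_yz; apply/le_partP => i.
exact: leq_trans (le_xy i) (le_yz i).
Qed.

Lemma le_part_antisym x y : le_part x y -> le_part y x -> x = y.
Proof.
move=> /le_partP le_xy /le_partP le_yx; apply: row_inj => i.
by apply/eqP; rewrite eqn_leq le_xy le_yx.
Qed.

(* The a x b rectangle (a columns, b rows); (a) = rectp a 1 is a one-row
   partition, (1^b) = rectp 1 b a one-column partition. *)
Definition rect a b : seq nat := if a is 0 then [::] else nseq b a.

Lemma rect_is_partition a b : is_partition (rect a b).
Proof.
case: a => [|a] //; apply/andP; split; last by apply/allP => n /nseqP[->].
apply/(sortedP 0) => i; rewrite size_nseq => lt_i1b.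
by rewrite !nth_nseq lt_i1b (ltnW lt_i1b) /=.
Qed.

Definition rectp a b : ypartition := exist _ (rect a b) (rect_is_partition a b).

Definition bottom : ypartition := rectp 0 0.

Lemma row_rect a b i : row (rectp a b) i = if i < b then a else 0.
Proof.
by rewrite /row /=; case: a => [|a]; [rewrite nth_nil; case: ifP | rewrite nth_nseq].
Qed.

Lemma bottom_le x : le_part bottom x.
Proof. by apply/le_partP => i; rewrite row_rect. Qed.

Lemma le_rectP a b x : 0 < b -> le_part (rectp a b) x <-> a <= row x b.-1.
Proof.
move=> b_pos; split.
  by move/le_partP => /(_ b.-1); rewrite row_rect prednK ?leqnn // ltn_predL b_pos.
move=> le_a_xb; apply/le_partP => i; rewrite row_rect; case: ifP => // lt_ib.
by apply: (leq_trans le_a_xb); apply: row_mono; rewrite -ltnS prednK.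
Qed.

Lemma one_one_rect : one_one = rectp 1 2.
Proof. exact: val_inj. Qed.

Lemma not_above_one_one x : ~ le_part one_one x <-> exists k, x = rectp k 1.
Proof.
rewrite one_one_rect le_rectP //=; split.
  move/negP; rewrite -ltnNge ltnS leqn0 => /eqP x1; exists (row x 0).
  apply: row_inj => i; rewrite row_rect; case: i => [|i] //=.
  by apply/eqP; rewrite -leqn0 -x1 row_mono.
by move=> [k ->]; rewrite row_rect.
Qed.

Lemma not_above_two x : ~ le_part (rectp 2 1) x <-> exists k, x = rectp 1 k.
Proof.
rewrite le_rectP //=; split.
  move/negP; rewrite -ltnNge ltnS => x0; exists (size (val x)).
  apply: row_inj => i; rewrite row_rect -row_pos.
  case: (posnP (row x i)) => [-> //| xi_pos]; apply/eqP; rewrite eqn_leq xi_pos.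
  by rewrite andbT (leq_trans _ x0) // row_mono.
by move=> [k ->]; rewrite row_rect; case: ifP.
Qed.

Lemma col0_bottom : rectp 1 0 = bottom.
Proof. exact: val_inj. Qed.

Lemma le_row_rect k m : le_part (rectp k 1) (rectp m 1) = (k <= m).
Proof. by apply/idP/idP; rewrite le_rectP // row_rect. Qed.

Lemma le_col_rect k m : le_part (rectp 1 k) (rectp 1 m) = (k <= m).
Proof.
case: k => [|k] //.
by apply/idP/idP; rewrite le_rectP // row_rect /=; case: ifP.
Qed.

Lemma column_galois s i j : is_partition s ->
  (j < nth 0 s i) = (i < count (fun n => j < n) s).
Proof.
elim: s i => [|a s IH] i s_part; first by rewrite nth_nil.
have s_tail : is_partition s.
  by case/andP: s_part => /= /path_sorted s_sorted /andP[_ s_pos]; apply/andP.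
rewrite /=; case: (ltnP j a) => [lt_ja|le_aj]; first by case: i => [|i] //=; rewrite IH.
have small n : n \in a :: s -> n <= j.
  by move=> n_s; exact: leq_trans (part_head s_part n_s) le_aj.
rewrite add0n (eq_in_count (a2 := pred0)); last first.
  by move=> n n_s /=; rewrite ltnNge small // inE n_s orbT.
rewrite count_pred0 ltn0 ltnNge; apply/negbF.
case: (ltnP i (size (a :: s))) => hi; last by rewrite nth_default.
by apply: small; rewrite mem_nth.
Qed.

Lemma nth_conj_seq s j : is_partition s ->
  nth 0 (conj_seq s) j = count (fun n => j < n) s.
Proof.
move=> s_part; rewrite /conj_seq; case: (ltnP j (head 0 s)) => hj.
  by rewrite nth_mkseq.
rewrite nth_default ?size_mkseq // (eq_in_count (a2 := pred0)) ?count_pred0 //.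
by move=> n n_s /=; rewrite ltnNge (leq_trans (part_head s_part n_s) hj).
Qed.

Lemma conj_seq_is_partition s : is_partition s -> is_partition (conj_seq s).
Proof.
move=> s_part; apply/andP; split.
  apply/(sortedP 0) => i _; rewrite !nth_conj_seq //=.
  by apply: sub_count => n /=; exact: ltnW.
apply/allP => n /mapP[j]; rewrite mem_iota add0n => /andP[_ lt_j_s0] ->.
by rewrite -column_galois //; case: s s_part lt_j_s0.
Qed.

Lemma row_conj p j : row (conj_part p) j = count (fun n => j < n) (val p).
Proof.
case: p => s s_part; rewrite /row /conj_part insubdK ?nth_conj_seq //.
exact: conj_seq_is_partition.
Qed.

Lemma conj_galois p i j : (j < row p i) = (i < row (conj_part p) j).
Proof. by rewrite row_conj /row column_galois //; case: p. Qed.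

Lemma leq_ltP m n : reflect (forall j, j < m -> j < n) (m <= n).
Proof.
apply: (iffP idP) => [le_mn j lt_jm | lt_mn]; first exact: leq_trans le_mn.
by rewrite leqNgt; apply/negP => /lt_mn; rewrite ltnn.
Qed.

Lemma conj_partK : involutive conj_part.
Proof.
move=> p; apply: row_inj => i; apply/eqP; rewrite eqn_leq.
by apply/andP; split; apply/leq_ltP => j; rewrite -!conj_galois.
Qed.

Lemma conj_mono p q : le_part p q -> le_part (conj_part p) (conj_part q).
Proof.
move/le_partP => le_pq; apply/le_partP => j; apply/leq_ltP => i.
by rewrite -!conj_galois => /leq_trans; apply.
Qed.

Lemma conj_automorphism : is_automorphism conj_part.
Proof.
split; first exact: (Bijective conj_partK conj_partK).
move=> p q; apply/idP/idP; first exact: conj_mono.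
by move/conj_mono; rewrite !conj_partK.
Qed.

Lemma upd_eq e n v : upd e n v n = v.
Proof. by rewrite /upd eqxx. Qed.

Lemma upd_succ e n v : upd e n.+1 v n = e n.
Proof. by rewrite /upd ltn_eqF. Qed.

Definition defines (P : nat -> formula) (S : ypartition -> Prop) : Prop :=
  forall e w, holds e (P w) <-> S (e w).

Definition FTrue : formula := FNot FFalse.

Definition FLt (t u : term) : formula := FAnd (FLe t u) (FNot (FLe u t)).

Definition MinOf (P : nat -> formula) (v : nat) : formula :=
  FAnd (P v) (FAll v.+1 (FImp (P v.+1) (FLe (TVar v) (TVar v.+1)))).

Definition MaxOf (P : nat -> formula) (v : nat) : formula :=
  FAnd (P v) (FAll v.+1 (FImp (P v.+1) (FLe (TVar v.+1) (TVar v)))).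

Definition GeOf (D : nat -> formula) (w : nat) : formula :=
  FEx w.+1 (FAnd (D w.+1) (FLe (TVar w.+1) (TVar w))).

Definition bigand (l : seq formula) : formula := foldr FAnd FTrue l.

Lemma defines_ext {P : nat -> formula} {S T : ypartition -> Prop} :
  defines P S -> (forall x, S x <-> T x) -> defines P T.
Proof. by move=> P_S S_T e w; rewrite P_S S_T. Qed.

Lemma defines_not {P : nat -> formula} {S : ypartition -> Prop} :
  defines P S -> defines (fun w => FNot (P w)) (fun x => ~ S x).
Proof. by move=> P_S e w /=; rewrite P_S. Qed.

Lemma defines_and {P Q : nat -> formula} {S T : ypartition -> Prop} :
  defines P S -> defines Q T -> defines (fun w => FAnd (P w) (Q w)) (fun x => S x /\ T x).
Proof. by move=> P_S Q_T e w /=; rewrite P_S Q_T. Qed.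

Lemma defines_above_one_one : defines (fun w => FLe TConst (TVar w)) (le_part one_one).
Proof. by []. Qed.

Lemma defines_min {P : nat -> formula} {S : ypartition -> Prop} {a : ypartition} :
  defines P S -> S a -> (forall y, S y -> le_part a y) ->
  defines (MinOf P) (fun x => x = a).
Proof.
move=> P_S Sa a_least e v /=; rewrite P_S.
split => [[Sv v_least] | ev_a]; last rewrite ev_a.
  apply: le_part_antisym (a_least _ Sv).
  by have := v_least a; rewrite /= upd_eq upd_succ P_S upd_eq; apply.
by split=> // y; rewrite /= P_S upd_eq upd_succ ev_a; exact: a_least.
Qed.

Lemma defines_max {P : nat -> formula} {S : ypartition -> Prop} {a : ypartition} :
  defines P S -> S a -> (forall y, S y -> le_part y a) ->
  defines (MaxOf P) (fun x => x = a).
Proof.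
move=> P_S Sa a_greatest e v /=; rewrite P_S.
split => [[Sv v_greatest] | ev_a]; last rewrite ev_a.
  apply: le_part_antisym (a_greatest _ Sv) _.
  by have := v_greatest a; rewrite /= upd_eq upd_succ P_S upd_eq; apply.
by split=> // y; rewrite /= P_S upd_eq upd_succ ev_a; exact: a_greatest.
Qed.

Lemma defines_ge {D : nat -> formula} {a : ypartition} :
  defines D (fun x => x = a) -> defines (GeOf D) (le_part a).
Proof.
move=> D_a e w /=; split => [[y] | le_aw]; first by rewrite D_a upd_eq upd_succ => -[->].
by exists a; rewrite D_a upd_eq upd_succ.
Qed.

Lemma holds_bigand (F : nat -> formula) l e :
  holds e (bigand (map F l)) <-> forall i, i \in l -> holds e (F i).
Proof.
elim: l => [|i l IH] /=; first by split => // _ [].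
rewrite IH; split => [[Fi Fl] j | Fl]; first by rewrite inE => /predU1P[->|/Fl].
by split => [|j j_l]; apply: Fl; rewrite inE ?eqxx ?j_l ?orbT.
Qed.

(* Chain C n defines the n-th element of the set defined by C, when that set
   is a chain indexed by nat: the 0-th element is its least element and the
   (n+1)-th the least one strictly above the n-th. *)
Fixpoint Chain (C : nat -> formula) (n : nat) (v : nat) : formula :=
  match n with
  | 0 => MinOf C v
  | n.+1 => MinOf (fun w =>
      FAnd (C w) (FEx w.+1 (FAnd (Chain C n w.+1) (FLt (TVar w.+1) (TVar w))))) v
  end.

Lemma defines_chain (C : nat -> formula) (r : nat -> ypartition) :
  (forall k m, le_part (r k) (r m) = (k <= m)) ->
  defines C (fun x => exists k, x = r k) ->
  forall n, defines (Chain C n) (fun x => x = r n).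
Proof.
move=> r_mono C_r; elim => [|n IH].
  by apply: (defines_min C_r); [exists 0 | move=> _ [k ->]; rewrite r_mono].
pose S x := (exists k, x = r k) /\ le_part (r n) x /\ ~ le_part x (r n).
apply: (defines_min (S := S)).
- move=> e w /=; rewrite C_r; split => [[Cw [y]] | [Cw [le_nw not_le_wn]]].
    by rewrite IH !upd_eq !upd_succ => -[->].
  by split=> //; exists (r n); rewrite IH !upd_eq !upd_succ.
- by split; [exists n.+1 | rewrite !r_mono ltnn leqnSn].
- by move=> _ [[k ->]]; rewrite !r_mono => -[_ /negP]; rewrite -ltnNge.
Qed.

Definition Row (n : nat) : nat -> formula :=
  Chain (fun w => FNot (FLe TConst (TVar w))) n.

Lemma defines_row n : defines (Row n) (fun x => x = rectp n 1).
Proof.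
apply: (defines_chain _ (fun k => rectp k 1)) => [k m | ]; first exact: le_row_rect.
exact: defines_ext (defines_not defines_above_one_one) not_above_one_one.
Qed.

Definition Col (n : nat) : nat -> formula :=
  Chain (fun w => FNot (GeOf (Row 2) w)) n.

Lemma defines_col n : defines (Col n) (fun x => x = rectp 1 n).
Proof.
apply: (defines_chain _ (fun k => rectp 1 k)) => [k m | ]; first exact: le_col_rect.
exact: defines_ext (defines_not (defines_ge (defines_row 2))) not_above_two.
Qed.

Definition Rect (a b : nat) : nat -> formula :=
  MaxOf (fun w => FAnd (FNot (GeOf (Row a.+1) w)) (FNot (GeOf (Col b.+1) w))).

Lemma defines_rect a b : defines (Rect a b) (fun x => x = rectp a b).
Proof.
apply: defines_max.
- exact: defines_and (defines_not (defines_ge (defines_row _)))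
                     (defines_not (defines_ge (defines_col _))).
- by rewrite /= !le_rectP //= !row_rect /= ltnn; case: ifP; rewrite ltnn.
- move=> y /=; rewrite !le_rectP //= => -[/negP y0 /negP yb].
  apply/le_partP => i; rewrite row_rect; case: ifP => [_|ge_ib].
    by apply: leq_trans (row_mono y 0 i (leq0n i)) _; rewrite leqNgt.
  move: yb; rewrite -eqn0Ngt => /eqP yb0.
  by rewrite -yb0 row_mono // leqNgt ge_ib.
Qed.

Definition Part (p : ypartition) : nat -> formula :=
  MinOf (fun w => bigand [seq GeOf (Rect (row p i) i.+1) w | i <- iota 0 (size (val p))]).

Lemma defines_part p : defines (Part p) (fun x => x = p).
Proof.
apply: (defines_min (S := le_part p)); last by [].
- move=> e w; rewrite (holds_bigand (fun i => GeOf (Rect (row p i) i.+1) w)).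
  split => [above_rects | /le_partP le_pw i _]; last first.
    by rewrite (defines_ge (defines_rect _ _)) le_rectP.
  apply/le_partP => i; case: (ltnP i (size (val p))) => [lt_ip | ge_ip].
    have := above_rects i; rewrite mem_iota (defines_ge (defines_rect _ _)) le_rectP //.
    by apply.
  by move: ge_ip; rewrite leqNgt -row_pos lt0n negbK => /eqP ->.
- exact: le_part_refl.
Qed.

Lemma all_definable pi : definable pi.
Proof. by exists (Part pi 0) => e x; rewrite defines_part upd_eq. Qed.

Definition covers (x y : ypartition) : Prop :=
  le_part x y /\ x <> y /\ forall z, le_part x z -> le_part z y -> z = x \/ z = y.

Lemma le_one_two : le_part (rectp 1 1) (rectp 2 1).
Proof. by rewrite le_row_rect. Qed.

Lemma below_col x k : le_part x (rectp 1 k) -> exists2 m, m <= k & x = rectp 1 m.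
Proof.
move=> le_xk; have [m x_col] : exists m, x = rectp 1 m.
  apply/not_above_two => /le_part_trans /(_ le_xk).
  by rewrite le_rectP // row_rect; case: ifP.
by exists m; rewrite // -le_col_rect -x_col.
Qed.

Lemma bottom_covers_one : covers bottom (rectp 1 1).
Proof.
split; [exact: bottom_le | split; first by move/(f_equal val)].
move=> z _ /below_col[[|[|m]] // _ ->]; by [left; exact: col0_bottom | right].
Qed.

Lemma covers_bottom y : covers bottom y -> y = rectp 1 1.
Proof.
move=> [_ [ne_by between]].
case: (boolP (le_part (rectp 1 1) y)) => [le_1y | /negP not_1y].
  by case: (between _ (bottom_le _) le_1y) => // /(f_equal val).
have [k y_col] : exists k, y = rectp 1 k.
  by apply/not_above_two => le_2y; apply: not_1y; exact: le_part_trans le_one_two le_2y.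
move: not_1y ne_by; rewrite y_col le_col_rect.
by case: k y_col => // _ _; rewrite col0_bottom.
Qed.

Lemma one_covers_one_one : covers (rectp 1 1) one_one.
Proof.
rewrite one_one_rect; split; first by rewrite le_col_rect.
split; first by move/(f_equal val).
move=> z le_1z /below_col[[|[|[|m]]] // _ z_col];
  rewrite z_col in le_1z *; by [left | right].
Qed.

Lemma covers_one y : covers (rectp 1 1) y -> y = one_one \/ y = rectp 2 1.
Proof.
move=> [le_1y [ne_1y between]].
case: (boolP (le_part (rectp 2 1) y)) => [le_2y | /negP /not_above_two[k y_col]].
  by right; case: (between _ le_one_two le_2y) => // /(f_equal val).
left; rewrite one_one_rect.
have k_ge2 : 1 < k.
  by move: le_1y ne_1y; rewrite y_col le_col_rect leq_eqVlt => /predU1P[<- //|].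
by case: (between (rectp 1 2)); rewrite ?y_col ?le_col_rect // => /(f_equal val).
Qed.

Section Automorphism.
Variable f : ypartition -> ypartition.
Hypothesis f_bij : bijective f.
Hypothesis f_mono : forall p q, le_part p q = le_part (f p) (f q).

Lemma holds_auto : f one_one = one_one ->
  forall phi e e', (forall m, e' m = f (e m)) -> holds e phi <-> holds e' phi.
Proof.
move=> f_c; have [g fK gK] := f_bij.
have f_term e e' t : (forall m, e' m = f (e m)) -> eval_term e' t = f (eval_term e t).
  by case: t => [n|] /=.
have f_upd e e' n v : (forall m, e' m = f (e m)) ->
    forall m, upd e' n (f v) m = f (upd e n v m).
  by move=> ee' m; rewrite /upd; case: ifP.
elim=> [t u|t u||phi IH|phi IH psi IH'|phi IH psi IH'|phi IH psi IH'|n phi IH|n phi IH]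
  e e' ee' /=.
- by rewrite !(f_term e e') // -f_mono.
- by rewrite !(f_term e e') //; split => [-> | /(can_inj fK)].
- by [].
- by rewrite (IH e e').
- by rewrite (IH e e') // (IH' e e').
- by rewrite (IH e e') // (IH' e e').
- by rewrite (IH e e') // (IH' e e').
- split => [[v] | [w]].
    by rewrite (IH _ _ (f_upd e e' n v ee')) => holds_v; exists (f v).
  by rewrite -(gK w) -(IH _ _ (f_upd e e' n (g w) ee')) => holds_w; exists (g w).
- split => [all_v w | all_v v].
    by rewrite -(gK w) -(IH _ _ (f_upd e e' n (g w) ee')).
  by rewrite (IH _ _ (f_upd e e' n v ee')).
Qed.

Lemma auto_fixes_all : f one_one = one_one -> forall p, f p = p.
Proof.
move=> f_c p; have p_def : holds (fun _ => p) (Part p 0) by apply/defines_part.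
have := (holds_auto f_c (Part p 0) (fun _ => p) (fun _ => f p) (fun _ => erefl)).1 p_def.
by move/defines_part.
Qed.

Lemma auto_bottom : f bottom = bottom.
Proof.
have [g _ gK] := f_bij; apply: le_part_antisym (bottom_le _).
by rewrite -[in X in le_part _ X](gK bottom) -f_mono bottom_le.
Qed.

Lemma auto_covers x y : covers x y -> covers (f x) (f y).
Proof.
have [g fK gK] := f_bij; move=> [le_xy [ne_xy between]].
split; first by rewrite -f_mono.
split; first by move/(can_inj fK).
move=> z; rewrite -(gK z) -!f_mono => le_xz le_zy.
by case: (between _ le_xz le_zy) => ->; [left | right].
Qed.

Lemma auto_one_one : f one_one = one_one \/ f one_one = rectp 2 1.
Proof.
have f_one : f (rectp 1 1) = rectp 1 1.
  apply: covers_bottom; rewrite -auto_bottom; exact: auto_covers bottom_covers_one.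
by apply: covers_one; rewrite -f_one; exact: auto_covers one_covers_one_one.
Qed.

End Automorphism.

Lemma automorphism_comp {f h : ypartition -> ypartition} :
  is_automorphism f -> is_automorphism h -> is_automorphism (h \o f).
Proof.
move=> [f_bij f_mono] [h_bij h_mono]; split; first exact: bij_comp.
by move=> p q; rewrite f_mono h_mono.
Qed.

Lemma conj_two : conj_part (rectp 2 1) = one_one.
Proof. by apply: row_inj => -[|[|i]]; rewrite row_conj /row /= ?nth_nil. Qed.

Theorem proposition3p3 :
  (forall pi : ypartition, definable pi) /\
  (is_automorphism conj_part /\
   (exists p : ypartition, conj_part p <> p) /\
   forall f : ypartition -> ypartition, is_automorphism f ->
     (forall p, f p = p) \/ (forall p, f p = conj_part p)).
Proof.
split; first exact: all_definable.
split; first exact: conj_automorphism.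
split; first by exists one_one; rewrite -{1}conj_two conj_partK => /(f_equal val).
move=> f f_auto; have [f_bij f_mono] := f_auto.
case: (auto_one_one f f_bij f_mono) => f_c; [left | right].
  exact: auto_fixes_all.
have [conj_f_bij conj_f_mono] := automorphism_comp f_auto conj_automorphism.
have conj_f_c : conj_part (f one_one) = one_one by rewrite f_c conj_two.
move=> p; apply: (can_inj conj_partK); rewrite conj_partK.
exact: (auto_fixes_all _ conj_f_bij conj_f_mono conj_f_c p).
Qed.
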